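(* Let $n\ge3$ and $r\in[3,n]$, and suppose $\tilde{\mathfrak b}_r=\mathfrak a\cdot\mathfrak b$ with $\mathfrak a,\mathfrak b\in\mathrm{Mon}(R)\setminus\{R\}$; let $\alpha=\operatorname{mdeg}(\mathfrak a)$, $\beta=\operatorname{mdeg}(\mathfrak b)$. Then: (1) $\alpha,\beta\ge1$ and $\alpha+\beta=a_{\{1\}\cup[3,r]}$; (2) $X^\alpha,Y^\alpha\in G(\mathfrak a)$ and $X^\beta,Y^\beta\in G(\mathfrak b)$; (3) $\alpha=a_{I_1}$ and $\beta=a_{I_2}$ for some $I_1,I_2\subseteq\{1\}\cup[3,r]$ with $I_1\cap I_2=\emptyset$.
   Context: Let $K$ be a field, $N\ge2$, $R=K[X_1,\dots,X_N]$, $X=X_1$, $Y=X_2$. $\mathrm{Mon}(R)$ is the monoid of nonzero monomial ideals of $R$ under ideal multiplication, with identity $R$. For a nonzero ideal $J$, $\operatorname{mdeg}(J)$ is the least $t$ such that $J$ contains a polynomial whose nonzero homogeneous component of smallest degree has degree $t$. For $J\in\mathrm{Mon}(R)$, $G(J)$ denotes the unique set of monomial generators of $J$ that is minimal with respect to divisibility. $[x,y]=\{z\in\mathbb Z:x\le z\le y\}$. For $i\in\mathbb N^+$, $\mathfrak b_i=\langle X^i,Y^i\rangle$. Fix an integer $n\ge 3$ and positive integers $a_1,\dots,a_{n+1}$ with (C1) $a_{n+1}=a_1+\dots+a_{n-1}+2a_n$ and (C2) $a_{i+1}>2(a_1+\dots+a_i)$ for all $i\in[1,n-1]$. For $I\subseteq[1,n+1]$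 put $a_I=\sum_{i\in I}a_i$ ($a_\emptyset=0$). For $r\in[3,n]$, $\tilde{\mathfrak b}_r$ is the ideal generated by $\mathfrak b_{a_1}\mathfrak b_{a_3}\mathfrak b_{a_4}\cdots\mathfrak b_{a_r}$ together with the monomial $X^{a_{[3,r]}-a_2}Y^{a_3-a_2}$. *)

From mathcomp Require Import all_boot all_algebra.
From mathcomp Require Import mpoly.
Set Implicit Arguments. Unset Strict Implicit. Unset Printing Implicit Defensive.
Import GRing.Theory.
Local Open Scope ring_scope.

Section MonIdeals.
Variables (K : fieldType) (N : nat).
Notation Rp := {mpoly K[N]}.

Definition ideal_gen (S : Rp -> Prop) : Rp -> Prop :=
  fun p => exists s : seq (Rp * Rp),
    (forall x, x \in s -> S x.2) /\ p = \sum_(x <- s) x.1 * x.2.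

Definition ideal_mul (I J : Rp -> Prop) : Rp -> Prop :=
  ideal_gen (fun q => exists f g, I f /\ J g /\ q = f * g).

Definition ideal_eq (I J : Rp -> Prop) : Prop := forall p, I p <-> J p.

Definition is_monomial_ideal (I : Rp -> Prop) : Prop :=
  exists M : 'X_{1..N} -> Prop,
    ideal_eq I (ideal_gen (fun q => exists m, M m /\ q = 'X_[m])).

Definition in_Mon (I : Rp -> Prop) : Prop :=
  is_monomial_ideal I /\ exists p, I p /\ p != 0.

Definition ne_unit_ideal (I : Rp -> Prop) : Prop := ~ I 1.

Definition hcomp (p : Rp) (d : nat) : Rp :=
  \sum_(m <- msupp p | mdeg m == d) p@_m *: 'X_[m].

Definition lowdeg_is (p : Rp) (t : nat) : Prop :=
  hcomp p t != 0 /\ forall d, (d < t)%N -> hcomp p d = 0.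

Definition is_mdeg (J : Rp -> Prop) (t : nat) : Prop :=
  (exists p, J p /\ lowdeg_is p t) /\
  (forall p s, J p -> lowdeg_is p s -> (t <= s)%N).

Definition in_G (J : Rp -> Prop) (m : 'X_{1..N}) : Prop :=
  J 'X_[m] /\
  forall m', J 'X_[m'] -> (exists q : Rp, 'X_[m] = q * 'X_[m']) -> m' = m.

(* exponent vector of X^u Y^v  (X = X_1, Y = X_2, i.e. indices 0 and 1) *)
Definition xy (u v : nat) : 'X_{1..N} :=
  [multinom (if (i : nat) == 0%N then u else if (i : nat) == 1%N then v else 0%N)
  | i < N].

Definition bideal (i : nat) : Rp -> Prop :=
  ideal_gen (fun q => q = 'X_[xy i 0] \/ q = 'X_[xy 0 i]).

Definition btilde (a : nat -> nat) (r : nat) : Rp -> Prop :=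
  let P := foldl ideal_mul (bideal (a 1%N))
                 [seq bideal (a i) | i <- iota 3 (r - 2)] in
  ideal_gen (fun q => P q \/
    q = 'X_[xy ((\sum_(3 <= i < r.+1) a i) - a 2%N)%N (a 3%N - a 2%N)%N]).

End MonIdeals.

From mathcomp Require Import all_boot all_algebra.
From mathcomp Require Import mpoly.
From mathcomp Require Import zify.
Set Implicit Arguments. Unset Strict Implicit. Unset Printing Implicit Defensive.
Import GRing.Theory.
Local Open Scope ring_scope.

(* Every monomial of btilde is divisible either by a generator X^(a_I1) Y^(a_I2)
   of b_{a_1} b_{a_3} ... b_{a_r}, with I1, I2 a partition of {1} u [3, r], of
   degree D = a_({1} u [3, r]), or by the extra generator, whose degree exceeds D.
   Every monomial of a b is divisible by g h with g, h generators of a, b, of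
   degrees at least alpha, beta; so alpha + beta >= D. The pure powers X^D, Y^D
   lie in btilde = a b, and their divisors g h are pure powers of degree <= D:
   hence alpha + beta = D, X^alpha, Y^alpha lie in a and X^beta, Y^beta in b,
   and these are minimal generators by degree. Finally X^alpha Y^beta lies in
   a b and has degree D, so it is one of the generators X^(a_I1) Y^(a_I2). *)

Section Divisibility.
Variable N : nat.
Implicit Types (m g h : 'X_{1..N}).

Lemma lepm_add g1 g2 m1 m2 :
  (g1 <= m1)%MM -> (g2 <= m2)%MM -> (g1 + g2 <= m1 + m2)%MM.
Proof.
move=> /mnm_lepP le1 /mnm_lepP le2; apply/mnm_lepP => i.
by rewrite !mnmDE leq_add.
Qed.

Lemma lepm_mdeg m1 m2 : (m1 <= m2)%MM -> (mdeg m1 <= mdeg m2)%N.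
Proof. by move=> le; rewrite -(submK le) mdegD leq_addl. Qed.

Lemma lepm_mdeg_eq m1 m2 :
  (m1 <= m2)%MM -> (mdeg m2 <= mdeg m1)%N -> m1 = m2.
Proof.
move=> le; rewrite -{1}(submK le) mdegD => hd.
have /eqP : mdeg (m2 - m1)%MM = 0%N by lia.
by rewrite mdeg_eq0 => /eqP z; rewrite -(submK le) z add0m.
Qed.

Lemma lepm_mulmn1 h j u : (h <= U_(j) *+ u)%MM -> h = (U_(j) *+ mdeg h)%MM.
Proof.
move/mnm_lepP => le.
have hz i : i != j -> h i = 0%N.
  move=> ne; apply/eqP; rewrite -leqn0.
  by move: (le i); rewrite mulmnE mnm1E eq_sym (negbTE ne).
have -> : mdeg h = h j by rewrite mdegE (bigD1 j) //= big1 ?addn0 // => i /hz.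
apply/mnmP => i; rewrite mulmnE mnm1E.
by case: eqP => [<-|/eqP ne]; rewrite ?mul1n ?mul0n // hz // eq_sym.
Qed.

End Divisibility.

Section MonomialSupport.
Variables (K : fieldType) (N : nat).
Notation Rp := {mpoly K[N]}.
Implicit Types (p q : Rp) (m g : 'X_{1..N}) (G H : 'X_{1..N} -> Prop).
Implicit Types (A B S : Rp -> Prop).

Definition mdiv_by G m := exists2 g, G g & (g <= m)%MM.

Definition supp_mdiv_by G p := forall m, m \in msupp p -> mdiv_by G m.

Lemma supp_mdiv_by0 G : supp_mdiv_by G 0.
Proof. by move=> m; rewrite mcoeff_msupp mcoeff0 eqxx. Qed.

Lemma supp_mdiv_byD G p q :
  supp_mdiv_by G p -> supp_mdiv_by G q -> supp_mdiv_by G (p + q).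
Proof.
move=> hp hq m /msuppD_le; rewrite mem_cat => /orP[]; [exact: hp|exact: hq].
Qed.

Lemma supp_mdiv_byMl G p q : supp_mdiv_by G q -> supp_mdiv_by G (p * q).
Proof.
move=> hq m /msuppM_le /allpairsP [[m1 m2] /= [_ h2 ->]].
have [g Gg le] := hq _ h2.
by exists g => //; apply: lepm_trans le (lem_addl _ _).
Qed.

Lemma supp_mdiv_byX G m : G m -> supp_mdiv_by G 'X_[m].
Proof.
by move=> Gm k; rewrite msuppX inE => /eqP ->; exists m => //; exact: lepm_refl.
Qed.

Lemma mdiv_by_mpolyX G m : supp_mdiv_by G 'X_[m] -> mdiv_by G m.
Proof. by apply; rewrite msuppX mem_seq1. Qed.

Lemma supp_mdiv_by_sub G H p :
  (forall g, G g -> H g) -> supp_mdiv_by G p -> supp_mdiv_by H p.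
Proof. by move=> GH hp m /hp [g /GH]; exists g. Qed.

Lemma supp_mdiv_by_gen G S : (forall q, S q -> supp_mdiv_by G q) ->
  forall p, ideal_gen S p -> supp_mdiv_by G p.
Proof.
move=> hS p [s [hs ->]]; elim: s hs => [|x s IH] hs.
  by rewrite big_nil; exact: supp_mdiv_by0.
rewrite big_cons; apply: supp_mdiv_byD.
  by apply/supp_mdiv_byMl/hS/hs; rewrite inE eqxx.
by apply: IH => y ys; apply: hs; rewrite inE ys orbT.
Qed.

Definition mnm_sumset G H m := exists g h, [/\ G g, H h & m = (g + h)%MM].

Lemma supp_mdiv_by_mul G H A B :
  (forall p, A p -> supp_mdiv_by G p) -> (forall p, B p -> supp_mdiv_by H p) ->
  forall p, ideal_mul A B p -> supp_mdiv_by (mnm_sumset G H) p.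
Proof.
move=> hA hB; apply: supp_mdiv_by_gen => q [f [h [Af [Bh ->]]]] m.
move=> /msuppM_le /allpairsP [[m1 m2] /= [h1 h2 ->]].
have [g1 G1 le1] := hA _ Af _ h1; have [g2 H2 le2] := hB _ Bh _ h2.
by exists (g1 + g2)%MM; [exists g1, g2 | exact: lepm_add].
Qed.

Lemma ideal_gen_mem S q : S q -> ideal_gen S q.
Proof.
move=> Sq; exists [:: (1, q)]; split; first by move=> x; rewrite inE => /eqP ->.
by rewrite big_seq1 mul1r.
Qed.

Lemma ideal_mul_mpolyXD A B m1 m2 :
  A 'X_[m1] -> B 'X_[m2] -> ideal_mul A B 'X_[m1 + m2].
Proof.
by move=> h1 h2; apply: ideal_gen_mem; exists 'X_[m1], 'X_[m2]; rewrite mpolyXD.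
Qed.

Lemma mpolyX_dvd_lepm m m' q : 'X_[m] = q * 'X_[m'] -> (m' <= m)%MM.
Proof.
move=> E; have : supp_mdiv_by (eq m') ('X_[m] : Rp).
  by rewrite E; apply/supp_mdiv_byMl/supp_mdiv_byX.
by case/mdiv_by_mpolyX => g <-.
Qed.

Definition mgen_of A (M : 'X_{1..N} -> Prop) :=
  (forall p, A p -> supp_mdiv_by M p) /\ (forall m, M m -> A 'X_[m]).

Lemma monomial_ideal_mgen A : is_monomial_ideal A -> exists M, mgen_of A M.
Proof.
case=> M hM; exists M; split.
  by move=> p /hM; apply: supp_mdiv_by_gen => q [m [Mm ->]]; exact: supp_mdiv_byX.
by move=> m Mm; apply/hM/ideal_gen_mem; exists m.
Qed.

End MonomialSupport.

Section MinimalDegree.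
Variables (K : fieldType) (N : nat).
Notation Rp := {mpoly K[N]}.
Implicit Types (p : Rp) (m g : 'X_{1..N}) (A B : Rp -> Prop).

Lemma lowdeg_is_mpolyX m : lowdeg_is ('X_[m] : Rp) (mdeg m).
Proof.
have E d : hcomp ('X_[m] : Rp) d = if mdeg m == d then 'X_[m] else 0.
  rewrite /hcomp msuppX big_cons big_nil mcoeffX eqxx scale1r addr0.
  by case: eqP.
split; first by rewrite E eqxx -msupp_eq0 msuppX.
by move=> d hd; rewrite E; case: eqP => // h; rewrite h ltnn in hd.
Qed.

Lemma hcomp_neq0 p t : hcomp p t != 0 -> exists2 m, m \in msupp p & mdeg m = t.
Proof.
rewrite /hcomp => h; have: has (fun m => mdeg m == t) (msupp p).
  apply/negPn/negP => /hasPn hn; move/eqP: h; apply.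
  by rewrite big_seq_cond big1 // => m /andP[/hn /negbTE ->].
by case/hasP => m hm /eqP; exists m.
Qed.

Lemma is_mdeg_mpolyX A al m : is_mdeg A al -> A 'X_[m] -> (al <= mdeg m)%N.
Proof. by case=> _ hlow /hlow; apply; exact: lowdeg_is_mpolyX. Qed.

Lemma is_mdeg_mgen A M al : mgen_of A M -> is_mdeg A al -> exists2 g, M g & mdeg g = al.
Proof.
move=> [hsupp hM] hal; have [[p [Ap [lp _]]] _] := hal.
have [m mp dm] := hcomp_neq0 lp.
have [g Mg le] := hsupp _ Ap _ mp.
exists g => //; apply/eqP; rewrite eqn_leq -{1}dm lepm_mdeg //=.
exact: is_mdeg_mpolyX hal (hM _ Mg).
Qed.

Lemma mdeg_gt0_proper A m : ne_unit_ideal A -> A 'X_[m] -> (0 < mdeg m)%N.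
Proof.
move=> A1 Am; rewrite lt0n mdeg_eq0; apply/negP => /eqP m0.
by apply: A1; rewrite -mpolyX0 -m0.
Qed.

Lemma in_G_min_mdeg A al j :
  is_mdeg A al -> A 'X_[U_(j) *+ al] -> in_G A (U_(j) *+ al)%MM.
Proof.
move=> hal Aj; split => // m' Am' [q /mpolyX_dvd_lepm le].
rewrite (lepm_mulmn1 le); congr (_ *+ _)%MM; apply/eqP; rewrite eqn_leq.
have := lepm_mdeg le; rewrite mdegMn mdeg1 mul1n => -> /=.
exact: is_mdeg_mpolyX hal Am'.
Qed.

Lemma ideal_mul_mulmn1 A B MA MB al be j D :
  mgen_of A MA -> mgen_of B MB -> is_mdeg A al -> is_mdeg B be ->
  (D <= al + be)%N -> ideal_mul A B 'X_[U_(j) *+ D] ->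
  [/\ A 'X_[U_(j) *+ al], B 'X_[U_(j) *+ be] & (al + be = D)%N].
Proof.
move=> [hA MA_A] [hB MB_B] hal hbe leD /(supp_mdiv_by_mul hA hB) /mdiv_by_mpolyX.
case=> _ [g1 [g2 [/MA_A A1 /MB_B B2 ->]]] le.
have le1 := lepm_trans (lem_addr g1 g2) le.
have le2 := lepm_trans (lem_addl g1 g2) le.
have := lepm_mdeg le; rewrite mdegD mdegMn mdeg1 mul1n => dD.
have := is_mdeg_mpolyX hal A1; have := is_mdeg_mpolyX hbe B2 => d2 d1.
have e1 : mdeg g1 = al by lia.
have e2 : mdeg g2 = be by lia.
by rewrite -e1 -e2 -(lepm_mulmn1 le1) -(lepm_mulmn1 le2); split => //; lia.
Qed.

End MinimalDegree.

Section Axes.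
Variables (N : nat) (hN : (2 <= N)%N).
Let iX : 'I_N := Ordinal (ltnW hN).
Let iY : 'I_N := Ordinal hN.

Lemma xyD u v u' v' : (xy N u v + xy N u' v')%MM = xy N (u + u') (v + v').
Proof. by apply/mnmP => i; rewrite mnmDE !mnmE; case: ifP => // _; case: ifP. Qed.

Lemma xy_u0 u : xy N u 0 = (U_(iX) *+ u)%MM.
Proof.
apply/mnmP => i; rewrite mnmE mulmnE mnm1E.
by case: i => [[|[|i]] hi]; rewrite /= ?mul1n.
Qed.

Lemma xy_0v v : xy N 0 v = (U_(iY) *+ v)%MM.
Proof.
apply/mnmP => i; rewrite mnmE mulmnE mnm1E.
by case: i => [[|[|i]] hi]; rewrite /= ?mul1n.
Qed.

Lemma mdeg_xy u v : mdeg (xy N u v) = (u + v)%N.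
Proof.
have -> : xy N u v = (xy N u 0 + xy N 0 v)%MM by rewrite xyD addn0.
by rewrite mdegD xy_u0 xy_0v !mdegMn !mdeg1 !mul1n.
Qed.

Lemma xy_inj u v u' v' : xy N u v = xy N u' v' -> u = u' /\ v = v'.
Proof.
move=> E; split.
  by have := congr1 (fun m : 'X_{1..N} => m iX) E; rewrite !mnmE.
by have := congr1 (fun m : 'X_{1..N} => m iY) E; rewrite !mnmE.
Qed.

End Axes.

Lemma disjoint_setU1 (T : finType) (x : T) (A B : {set T}) :
  [disjoint x |: A & B] = (x \notin B) && [disjoint A & B].
Proof. by rewrite !disjoints_subset subUset sub1set inE. Qed.

Section PowerIdealProduct.
Variables (K : fieldType) (N : nat) (a : nat -> nat) (r : nat).
Notation Rp := {mpoly K[N]}.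
Notation bideal := (@bideal K N).
Implicit Types (p : Rp) (g h : 'X_{1..N}).

Definition bprod k : Rp -> Prop :=
  foldl (@ideal_mul K N) (bideal (a 1)) [seq bideal (a i) | i <- iota 3 k].

Definition bsum k := (a 1 + \sum_(3 <= i < 3 + k) a i)%N.

(* The generators of bprod k: X^(a_I1) Y^(a_I2) for a partition I1, I2 of
   {1} u [3, k + 2]. *)
Definition bsplit k g := exists I1 I2 : {set 'I_r.+1},
  [/\ [disjoint I1 & I2],
      forall i : 'I_r.+1, i \in I1 :|: I2 -> i = 1%N :> nat \/ (3 <= i < 3 + k)%N,
      g = xy N (\sum_(i in I1) a i) (\sum_(i in I2) a i)
    & (\sum_(i in I1) a i + \sum_(i in I2) a i = bsum k)%N].

Lemma bprodS k : bprod k.+1 = ideal_mul (bprod k) (bideal (a (3 + k))).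
Proof. by rewrite /bprod -(addn1 k) iotaD map_cat foldl_cat. Qed.

Lemma bsumS k : bsum k.+1 = (bsum k + a (3 + k))%N.
Proof. by rewrite /bsum addnS big_nat_recr /= ?addnA //; lia. Qed.

Lemma bideal_pow b : bideal b 'X_[xy N b 0] /\ bideal b 'X_[xy N 0 b].
Proof. by split; apply: ideal_gen_mem; [left|right]. Qed.

Lemma bideal_supp b p :
  bideal b p -> supp_mdiv_by (fun g => g = xy N b 0 \/ g = xy N 0 b) p.
Proof. by apply: supp_mdiv_by_gen => q [] ->; apply: supp_mdiv_byX; [left|right]. Qed.

Lemma bprod_pow k : bprod k 'X_[xy N (bsum k) 0] /\ bprod k 'X_[xy N 0 (bsum k)].
Proof.
elim: k => [|k [IHx IHy]]; first by rewrite /bsum big_geq // addn0; exact: bideal_pow.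
have [bX bY] := bideal_pow (a (3 + k)).
have Ex : xy N (bsum k + a (3 + k)) 0 = (xy N (bsum k) 0 + xy N (a (3 + k)) 0)%MM.
  by rewrite xyD.
have Ey : xy N 0 (bsum k + a (3 + k)) = (xy N 0 (bsum k) + xy N 0 (a (3 + k)))%MM.
  by rewrite xyD.
by rewrite bprodS bsumS Ex Ey; split; apply: ideal_mul_mpolyXD.
Qed.

Lemma bsplit0 g : (0 < r)%N ->
  g = xy N (a 1) 0 \/ g = xy N 0 (a 1) -> bsplit 0 g.
Proof.
move=> r0; set i1 : 'I_r.+1 := inord 1.
have i1E : i1 = 1%N :> nat by rewrite inordK.
have in_i1 i : i \in [set i1] -> i = 1%N :> nat by rewrite inE => /eqP ->.
have sum_i1 : \sum_(i in [set i1]) a i = a 1 by rewrite big_set1 i1E.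
have bsum0 : bsum 0 = a 1 by rewrite /bsum big_geq ?addn0.
case=> ->.
  exists [set i1], set0; rewrite disjoints1 inE sum_i1 big_set0 bsum0 !addn0.
  by split => // i; rewrite setU0 => /in_i1; left.
exists set0, [set i1]; rewrite disjoint_sym disjoints1 inE sum_i1 big_set0 bsum0 add0n.
by split => // i; rewrite set0U => /in_i1; left.
Qed.

Lemma bsplitS k g h : (3 + k <= r)%N -> bsplit k g ->
  h = xy N (a (3 + k)) 0 \/ h = xy N 0 (a (3 + k)) -> bsplit k.+1 (g + h).
Proof.
move=> hk [I1 [I2 [dj hI -> hs]]].
set j : 'I_r.+1 := inord (3 + k).
have jE : j = (3 + k)%N :> nat by rewrite inordK // ltnS.
have [j1 j2] : j \notin I1 /\ j \notin I2.
  by apply/norP; rewrite -in_setU; apply/negP => /hI; rewrite jE; lia.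
have hIS i : i \in j |: (I1 :|: I2) -> i = 1%N :> nat \/ (3 <= i < 3 + k.+1)%N.
  by rewrite in_setU1 => /orP[/eqP ->|/hI]; rewrite ?jE; lia.
case=> ->; rewrite xyD.
  exists (j |: I1), I2; rewrite disjoint_setU1 j2 dj big_setU1 //= jE bsumS -hs.
  split=> //; [by move=> i; rewrite -setUA => /hIS | by rewrite addnC addn0 |].
  by rewrite -addnA addnC.
exists I1, (j |: I2).
rewrite disjoint_sym disjoint_setU1 j1 disjoint_sym dj big_setU1 //= jE bsumS -hs.
split=> //; [by move=> i; rewrite setUCA => /hIS | by rewrite addn0 addnC |].
by rewrite addnCA addnC.
Qed.

Lemma bprod_supp k : (3 + k <= r.+1)%N ->
  forall p, bprod k p -> supp_mdiv_by (bsplit k) p.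
Proof.
elim: k => [|k IH] hk p.
  by move/bideal_supp; apply: supp_mdiv_by_sub => g; apply: bsplit0; lia.
rewrite bprodS => /(supp_mdiv_by_mul (IH (ltnW hk)) (@bideal_supp _)).
by apply: supp_mdiv_by_sub => _ [g [h [Sg Bh ->]]]; apply: bsplitS => //; lia.
Qed.

End PowerIdealProduct.

Section Btilde.
Variables (K : fieldType) (N : nat) (hN : (2 <= N)%N) (a : nat -> nat) (r : nat).
Hypothesis hr : (3 <= r)%N.
Notation D := (a 1 + \sum_(3 <= i < r.+1) a i)%N.
Implicit Types (p : {mpoly K[N]}) (g : 'X_{1..N}).

Lemma bsplit_mdeg k g : bsplit a r k g -> mdeg g = bsum a k.
Proof. by case=> I1 [I2 [_ _ -> <-]]; exact: mdeg_xy. Qed.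

Lemma bsum_btilde : bsum a (r - 2) = D.
Proof. by rewrite /bsum (_ : 3 + (r - 2) = r.+1)%N //; lia. Qed.

Lemma btilde_pow :
  btilde (K:=K) a r 'X_[xy N D 0] /\ btilde (K:=K) a r 'X_[xy N 0 D].
Proof.
rewrite -bsum_btilde; have [bX bY] := bprod_pow K N a (r - 2).
by split; apply: ideal_gen_mem; left.
Qed.

(* The extra generator X^(a_[3,r] - a_2) Y^(a_3 - a_2) has degree > D by (C2). *)
Lemma btilde_supp p : (0 < a 1)%N -> (2 * (\sum_(1 <= j < 3) a j) < a 3)%N ->
  btilde (K:=K) a r p ->
  supp_mdiv_by (fun g => (bsplit a r (r - 2) g /\ mdeg g = D) \/ (D < mdeg g)%N) p.
Proof.
move=> a1_gt0 a3_gt; apply: supp_mdiv_by_gen => q [hq|->].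
  have hk : (3 + (r - 2) <= r.+1)%N by lia.
  apply: supp_mdiv_by_sub (bprod_supp (r:=r) hk hq) => g hg.
  by left; split; rewrite // -bsum_btilde; exact: bsplit_mdeg.
apply: supp_mdiv_byX; right; rewrite mdeg_xy //.
have : (a 3 <= \sum_(3 <= i < r.+1) a i)%N by rewrite big_ltn ?leq_addr.
move: a3_gt; rewrite big_ltn // big_ltn // big_geq //; lia.
Qed.

End Btilde.

Unset Implicit Arguments.

Theorem lemma4p12 (K : fieldType) (N : nat) (hN : (2 <= N)%N)
  (n : nat) (hn : (3 <= n)%N) (a : nat -> nat)
  (hpos : forall i, (1 <= i <= n.+1)%N -> (0 < a i)%N)
  (C1 : a n.+1 = ((\sum_(1 <= i < n) a i) + 2 * a n)%N)
  (C2 : forall i, (1 <= i <= n - 1)%N -> (2 * (\sum_(1 <= j < i.+1) a j) < a i.+1)%N)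
  (r : nat) (hr : (3 <= r <= n)%N)
  (A B : {mpoly K[N]} -> Prop)
  (hA : in_Mon A) (hB : in_Mon B)
  (hA1 : ne_unit_ideal A) (hB1 : ne_unit_ideal B)
  (hAB : ideal_eq (btilde (K:=K) (N:=N) a r) (ideal_mul A B))
  (al be : nat) (hal : is_mdeg A al) (hbe : is_mdeg B be) :
  ((1 <= al)%N /\ (1 <= be)%N /\ (al + be = a 1%N + \sum_(3 <= i < r.+1) a i)%N) /\
  (in_G A (xy N al 0) /\ in_G A (xy N 0 al) /\
   in_G B (xy N be 0) /\ in_G B (xy N 0 be)) /\
  (exists I1 I2 : {set 'I_r.+1},
     (forall i : 'I_r.+1, i \in I1 :|: I2 -> (i : nat) = 1%N \/ (3 <= i)%N) /\
     [disjoint I1 & I2] /\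
     al = (\sum_(i in I1) a i)%N /\ be = (\sum_(i in I2) a i)%N).
Proof.
have [hr3 hrn] := andP hr.
have bt_supp p :=
  btilde_supp (K:=K) (p:=p) hN hr3 (hpos 1%N ltac:(lia)) (C2 2%N ltac:(lia)).
have [bX bY] := btilde_pow K hN a hr3.
rewrite (xy_u0 hN) in bX; rewrite (xy_0v hN) in bY.
have [[MA genA] [MB genB]] := (monomial_ideal_mgen hA.1, monomial_ideal_mgen hB.1).
have [gA MgA dgA] := is_mdeg_mgen genA hal.
have [gB MgB dgB] := is_mdeg_mgen genB hbe.
have leD : (a 1 + \sum_(3 <= i < r.+1) a i <= al + be)%N.
  have := ideal_mul_mpolyXD (genA.2 _ MgA) (genB.2 _ MgB).
  case/hAB/bt_supp/mdiv_by_mpolyX => g Hg /lepm_mdeg; rewrite mdegD dgA dgB.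
  by case: Hg => [[_ ->]|]; lia.
have [XA XB eD] := ideal_mul_mulmn1 genA genB hal hbe leD (proj1 (hAB _) bX).
have [YA YB _] := ideal_mul_mulmn1 genA genB hal hbe leD (proj1 (hAB _) bY).
have al_gt0 : (0 < al)%N by rewrite -dgA; exact: mdeg_gt0_proper hA1 (genA.2 _ MgA).
have be_gt0 : (0 < be)%N by rewrite -dgB; exact: mdeg_gt0_proper hB1 (genB.2 _ MgB).
split; first by [].
split; first by rewrite !(xy_u0 hN) !(xy_0v hN); split; [|split; [|split]];
  apply: in_G_min_mdeg.
rewrite -(xy_u0 hN) -(xy_0v hN) in XA YB.
have := ideal_mul_mpolyXD XA YB; rewrite xyD addn0 add0n.
case/hAB/bt_supp/mdiv_by_mpolyX => g [[[I1 [I2 [dj hI -> _]]] dg]|lt] le; last first.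
  by have := lepm_mdeg le; rewrite mdeg_xy //; lia.
have [<- <-] := xy_inj hN (lepm_mdeg_eq le ltac:(rewrite dg mdeg_xy //; lia)).
by exists I1, I2; split=> // i /hI; lia.
Qed.
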